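(* The Oracle Mechanism is almost budget feasible: there is a function $\varepsilon(\theta)\ge0$ depending only on $\theta$, with $\varepsilon(\theta)\to0$ as $\theta\to0$, such that on every instance with largeness ratio $\theta$ the total payment $\sum_{j=1}^k2r_{x_j}\partial_j$ is at most $(1+\varepsilon(\theta))B$.
   Context: Sellers $S=\{1,\dots,n\}$ each own one indivisible item and have a cost $c_i\ge0$. The buyer's utility is a monotone submodular $F:2^S\to\mathbb R_{\ge0}$, budget $B>0$; $c(T)=\sum_{i\in T}c_i$. $F^\star=\max\{F(T):c(T)\le B\}>0$; the largeness ratio is $\theta=\max_sF(\{s\})/F^\star$. Greedy sequence $\chi(F)=\langle x_1,\dots,x_n\rangle$: with $\chi_0=\emptyset$, $\chi_i=\{x_1,\dots,x_i\}$, $x_i$ maximizes $(F(\chi_{i-1}\cup\{s\})-F(\chi_{i-1}))/c_s$ over $s\notin\chi_{i-1}$ (ratio $+\infty$ if $c_s=0$; ties arbitrary); $\partial_i=F(\chi_i)-F(\chi_{i-1})$. Oracle Mechanism: compute $F^\star$, construct $\chi(F)$, let $k$ be the largest integer with $F(\chi_k)\le F^\star/2$, declare $\chi_k$ the winners, and pay each winner $x_j$ the amount $2r_{x_j}\partial_j$, where $r_s=B/F^\star_s$ and $F^\star_s=\max\{F(T):T\subseteq S\setminus\{s\},c(T)\le B\}$. *)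

From HB Require Import structures.
From mathcomp Require Import all_boot all_order all_algebra.
From mathcomp Require Import all_classical all_reals all_analysis.
Set Implicit Arguments. Unset Strict Implicit. Unset Printing Implicit Defensive.
Import Order.TTheory GRing.Theory Num.Theory.
Local Open Scope ring_scope.

Section Oracle.
Variable R : realType.
Variable n : nat.
(* Sellers are 'I_n (the paper's {1,...,n}, shifted to 0-based). *)
Variable c : 'I_n -> R.
Variable F : {set 'I_n} -> R.
Variable B : R.

Definition cost (T : {set 'I_n}) : R := \sum_(i in T) c i.

Definition monotoneF : Prop := forall A A' : {set 'I_n}, A \subset A' -> F A <= F A'.
Definition submodularF : Prop :=
  forall A A' : {set 'I_n}, F (A :|: A') + F (A :&: A') <= F A + F A'.

(* F^* = max { F T : c(T) <= B }  (the empty set is feasible and F >= 0). *)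
Definition Fstar : R := \big[Num.max/0]_(T : {set 'I_n} | cost T <= B) F T.

Definition Fstar_s (s : 'I_n) : R :=
  \big[Num.max/0]_(T : {set 'I_n} | (s \notin T) && (cost T <= B)) F T.

Definition theta : R := (\big[Num.max/0]_(s : 'I_n) F [set s]) / Fstar.

Definition rr (s : 'I_n) : R := B / Fstar_s s.

(* A candidate greedy sequence is x : 'I_n -> 'I_n, x (ord i) being x_{i+1}. *)
Variable x : 'I_n -> 'I_n.

Definition chi (i : nat) : {set 'I_n} := [set x j | j : 'I_n & (j < i)%N].

Definition ratio (A : {set 'I_n}) (s : 'I_n) : \bar R :=
  if c s == 0 then +oo%E else ((F (s |: A) - F A) / c s)%:E.

Definition is_greedy : Prop :=
  injective x /\
  forall (i : 'I_n) (s : 'I_n), s \notin chi i -> (ratio (chi i) s <= ratio (chi i) (x i))%E.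

Definition marg (j : 'I_n) : R := F (chi j.+1) - F (chi j).

Definition is_oracle_k (k : nat) : Prop :=
  (k <= n)%N /\ F (chi k) <= Fstar / 2 /\
  (forall i : nat, (k < i <= n)%N -> Fstar / 2 < F (chi i)).

Definition payment (k : nat) : R :=
  \sum_(j : 'I_n | (j < k)%N) 2 * rr (x j) * marg j.

End Oracle.

From HB Require Import structures.
From mathcomp Require Import all_boot all_order all_algebra.
From mathcomp Require Import all_classical all_reals all_analysis.
From mathcomp Require Import lra.
Set Implicit Arguments.
Unset Strict Implicit.
Unset Printing Implicit Defensive.
Import Order.TTheory GRing.Theory Num.Theory.
Local Open Scope ring_scope.

(* Every winner s = x_j has F({s}) <= m F^* with m = min(theta, 1/2), the
   bound by 1/2 coming from F({s}) <= F(chi_k) <= F^*/2.  Removing s from an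
   optimal set loses at most F({s}) by submodularity, so F^*_s >= (1 - m) F^*
   and r_s <= B / (F^* (1 - m)).  The marginals of the winners telescope to at most F(chi_k) <= F^*/2, hence
   the payment is at most B / (1 - m) <= (1 + 2m) B, since m <= 1/2. *)

Section PaymentBound.
Variable R : realType.
Variable n : nat.
Variable c : 'I_n -> R.
Variable F : {set 'I_n} -> R.
Variable B : R.
Hypothesis c_ge0 : forall i, 0 <= c i.
Hypothesis F_ge0 : forall A, 0 <= F A.
Hypothesis F_mono : monotoneF F.
Hypothesis F_submod : submodularF F.

Lemma cost_setD1_le T s : cost c (T :\ s) <= cost c T.
Proof.
rewrite /cost [X in _ <= X](big_setID [set s]) /= lerDr.
exact: sumr_ge0.
Qed.

Lemma F_le_setD1_add1 T s : F T <= F (T :\ s) + F [set s].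
Proof.
have T_sub : T \subset T :\ s :|: [set s].
  by apply/fintype.subsetP => y yT; rewrite !inE yT andbT orbC; case: (y == s).
have disj : (T :\ s) :&: [set s] = finset.set0.
  by apply/setP => y; rewrite !inE; case: (y == s); rewrite ?andbF.
have := F_submod (T :\ s) [set s]; rewrite disj.
have := F_mono T_sub; have := F_ge0 finset.set0; lra.
Qed.

Lemma Fstar_s_ge0 s : 0 <= Fstar_s c F B s.
Proof. by rewrite /Fstar_s; elim/big_ind: _ => // a b a_ge0 _; rewrite le_max a_ge0. Qed.

Lemma Fstar_sub1_le_Fstar_s s : Fstar c F B - F [set s] <= Fstar_s c F B s.
Proof.
rewrite lerBlDr /Fstar; apply: bigmax_le => [|T costT].
  by rewrite addr_ge0 ?Fstar_s_ge0.
apply: le_trans (F_le_setD1_add1 T s) _; rewrite lerD2r.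
apply: (@le_bigmax_cond _ _ _ 0 (T :\ s) _ F).
by rewrite !inE eqxx /= (le_trans (cost_setD1_le _ _)).
Qed.

Variable x : 'I_n -> 'I_n.

Lemma chi_subset i i' : (i <= i')%N -> chi x i \subset chi x i'.
Proof.
move=> le_ii'; apply/fintype.subsetP => y /imsetP[j]; rewrite inE => lt_ji ->.
by apply/imsetP; exists j; rewrite // inE (leq_trans lt_ji).
Qed.

Lemma mem_chi (j : 'I_n) : x j \in chi x j.+1.
Proof. by apply/imsetP; exists j; rewrite // inE. Qed.

Lemma marg_ge0 j : 0 <= marg F x j.
Proof. by rewrite subr_ge0; apply/F_mono/chi_subset. Qed.

Lemma sum_marg k : (k <= n)%N ->
  \sum_(j : 'I_n | (j < k)%N) marg F x j = F (chi x k) - F (chi x 0).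
Proof.
pose d j := F (chi x j.+1) - F (chi x j).
move=> le_kn; rewrite -(big_ord_widen_cond _ xpredT d le_kn) /=.
by rewrite -(big_mkord xpredT d) telescope_sumr.
Qed.

Section PositiveOptimum.
Hypothesis Fstar_gt0 : 0 < Fstar c F B.

Lemma theta_ge0 : 0 <= theta c F B.
Proof.
rewrite /theta divr_ge0 ?(ltW Fstar_gt0) //.
by elim/big_ind: _ => // a b a_ge0 _; rewrite le_max a_ge0.
Qed.

Lemma F1_le_theta_Fstar s : F [set s] <= theta c F B * Fstar c F B.
Proof.
rewrite /theta divfK ?gt_eqF //.
exact: (le_bigmax 0 (fun s => F [set s])).
Qed.

Lemma rr_le (m : R) s : 0 <= B -> m < 1 -> F [set s] <= m * Fstar c F B ->
  rr c F B s <= B / ((1 - m) * Fstar c F B).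
Proof.
move=> B_ge0 m_lt1 Fs_le.
have Fstar_s_ge : (1 - m) * Fstar c F B <= Fstar_s c F B s.
  by have := Fstar_sub1_le_Fstar_s s; lra.
have lb_gt0 : 0 < (1 - m) * Fstar c F B by rewrite mulr_gt0 // subr_gt0.
rewrite /rr ler_wpM2l // lef_pV2 ?posrE //.
exact: lt_le_trans Fstar_s_ge.
Qed.

Lemma payment_le_div (m : R) k : 0 <= B -> m < 1 -> is_oracle_k c F B x k ->
  (forall j : 'I_n, (j < k)%N -> F [set x j] <= m * Fstar c F B) ->
  payment c F B x k <= B / (1 - m).
Proof.
move=> B_ge0 m_lt1 [le_kn [F_chik _]] F1_le.
set K := B / ((1 - m) * Fstar c F B).
have K_ge0 : 0 <= K by rewrite divr_ge0 // mulr_ge0 ?subr_ge0 ?ltW.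
have KF : K * Fstar c F B = B / (1 - m) by rewrite /K invfM mulrA divfK ?gt_eqF.
have : payment c F B x k <= \sum_(j : 'I_n | (j < k)%N) 2 * K * marg F x j.
  apply: ler_sum => j lt_jk; rewrite ler_wpM2r ?marg_ge0 // ler_wpM2l //.
  exact/rr_le/F1_le.
rewrite -mulr_sumr sum_marg // -KF.
have := mulr_ge0 K_ge0 (F_ge0 (chi x 0)).
have : 0 <= K * (Fstar c F B / 2 - F (chi x k)) by rewrite mulr_ge0 ?subr_ge0.
lra.
Qed.

End PositiveOptimum.
End PaymentBound.

Lemma div_1subr_le (R : realFieldType) (y m : R) :
  0 <= y -> 0 <= m <= 1 / 2 -> y / (1 - m) <= (1 + 2 * m) * y.
Proof.
move=> y_ge0 /andP[m_ge0 m_le]; rewrite ler_pdivrMr; last by lra.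
have : 0 <= m * (1 - 2 * m) * y by rewrite !mulr_ge0 //; lra.
lra.
Qed.

Local Open Scope classical_set_scope.

Definition payment_slack {R : realType} (t : R) : R := 2 * Num.min (Num.max t 0) (1 / 2).

Lemma payment_slack_ge0 (R : realType) (t : R) : 0 <= payment_slack t.
Proof. by rewrite mulr_ge0 // le_min le_max lexx orbT /=; lra. Qed.

Lemma payment_slack_cvg0 (R : realType) : payment_slack t @[t --> (0 : R)^'+] --> 0.
Proof.
have lin_cvg : (fun t : R => 2 * t) t @[t --> 0^'+] --> 0.
  have : (fun t : R => 2 * t) t @[t --> 0] --> 0.
    by rewrite -[X in _ --> X](mulr0 (2 : R)); exact: mulrl_continuous.
  exact: cvg_within_filter.
apply: cvg_trans lin_cvg; apply: near_eq_cvg; near=> t.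
have t_gt0 : 0 < t by near: t; exact: nbhs_right_gt.
have t_lt : t < 1 / 2 by near: t; apply: nbhs_right_lt; lra.
by rewrite /payment_slack /= (max_idPl (ltW t_gt0)) (min_idPl (ltW t_lt)).
Unshelve. all: by end_near.
Qed.

Theorem lemma18 (R : realType) :
  exists eps : R -> R,
    (forall t : R, 0 <= eps t) /\
    (eps t @[t --> 0^'+] --> 0) /\
    forall (n : nat) (c : 'I_n -> R) (F : {set 'I_n} -> R) (B : R)
           (x : 'I_n -> 'I_n) (k : nat),
      (forall i, 0 <= c i) ->
      (forall A, 0 <= F A) ->
      monotoneF F -> submodularF F ->
      0 < B ->
      0 < Fstar c F B ->
      is_greedy c F x ->
      is_oracle_k c F B x k ->
      payment c F B x k <= (1 + eps (theta c F B)) * B.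
Proof.
exists payment_slack; split; first exact: payment_slack_ge0.
split; first exact: payment_slack_cvg0.
(* The bound holds for any ordering of the sellers, greedy or not. *)
move=> n c F B x k c_ge0 F_ge0 F_mono F_submod B_gt0 Fstar_gt0 _ oracle_k.
have theta_ge0 := theta_ge0 F_ge0 Fstar_gt0.
rewrite /payment_slack (max_idPl theta_ge0).
set m := Num.min (theta c F B) (1 / 2).
have m_range : 0 <= m <= 1 / 2 by rewrite /m le_min theta_ge0 ge_min lexx orbT /=; lra.
have F1_le (j : 'I_n) : (j < k)%N -> F [set x j]%SET <= m * Fstar c F B.
  move=> lt_jk; rewrite /m minr_pMl ?(ltW Fstar_gt0) // le_min F1_le_theta_Fstar //=.
  rewrite mul1r mulrC; apply: le_trans oracle_k.2.1.
  apply/F_mono; rewrite finset.sub1set.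
  exact: fintype.subsetP (chi_subset x lt_jk) _ (mem_chi x j).
apply: le_trans (div_1subr_le (ltW B_gt0) m_range).
apply: payment_le_div => //; [exact: ltW | by case/andP: m_range => _; lra].
Qed.
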